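(* Let $\gamma>\frac{4}{\sqrt n}$ and $B>\gamma\sqrt n$. For every input stream $a\in\{-1,0,1\}^n$, the output of algorithm $\mathsf{Apr}$ (with parameters $\gamma,B$) satisfies, with probability at least $1-\frac{1}{n^3}$ over its private randomness $r$, $$\Big|\mathsf{Apr}(a,r)-\sum_{j=1}^n a_j\Big|\le\frac{\gamma}{2}\sqrt n .$$ Consequently, for every distribution $\mathcal D$ on $\{-1,0,1\}^n$, $\mathbb E_{a\sim\mathcal D,r}\big[(\mathsf{Apr}(a,r)-\sum_{j=1}^n a_j)^2\big]\le\gamma^2 n$.
   Context: Algorithm $\mathsf{Apr}$ (logs base 2): set $p=\min\{6000\log^2 n\cdot\frac{B}{\gamma^2 n},1\}$ and counters $\Delta=\zeta=\Gamma=0$. For $j=1,\dots,n$: if $\zeta<20\log n\cdot pB$, draw an independent bit $r_j$ equal to $1$ with probability $p$, and if $r_j=1$ set $\Delta\leftarrow\Delta+a_j$ and $\zeta\leftarrow\zeta+\mathbb 1_{a_j\ne0}$; otherwise (if $\zeta\ge20\log n\cdot pB$) set $\Gamma\leftarrow\Gamma+a_j$. Output $\max\{\min\{\Delta/p+\Gamma,n\},-n\}$. *)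

From HB Require Import structures.
From mathcomp Require Import all_boot all_order all_algebra.
From mathcomp Require Import reals exp.
Set Implicit Arguments. Unset Strict Implicit. Unset Printing Implicit Defensive.
Import Order.TTheory GRing.Theory Num.Theory.
Local Open Scope ring_scope.

Section Apr.
Variable R : realType.

Definition log2 (x : R) : R := ln x / ln 2.

Definition tval (t : 'I_3) : R := (nat_of_ord t)%:R - 1.

Definition stream (n : nat) := {ffun 'I_n -> 'I_3}.
Definition aval n (a : stream n) (j : 'I_n) : R := tval (a j).
Definition true_sum n (a : stream n) : R := \sum_(j < n) aval a j.

Definition apr_p (n : nat) (gamma B : R) : R :=
  Num.min (6000 * (log2 n%:R) ^+ 2 * B / (gamma ^+ 2 * n%:R)) 1.

Definition apr_thr (n : nat) (gamma B : R) : R :=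
  20 * log2 n%:R * apr_p n gamma B * B.

Definition apr_step (thr : R) (s : R * nat * R) (x : R * bool) : R * nat * R :=
  let: (D, z, G) := s in
  let: (aj, rj) := x in
  if z%:R < thr then
    (if rj then (D + aj, addn z (aj != 0), G) else (D, z, G))
  else (D, z, G + aj).

(* output of Apr on input a with private random bits r (r_j is read only
   when zeta < threshold, exactly as in the algorithm) *)
Definition Apr (n : nat) (gamma B : R) (a : stream n) (r : {ffun 'I_n -> bool}) : R :=
  let p := apr_p n gamma B in
  let: (D, _, G) :=
    foldl (apr_step (apr_thr n gamma B)) (0, 0%N, 0)
          [seq (aval a j, r j) | j <- enum 'I_n] in
  Num.max (Num.min (D / p + G) n%:R) (- n%:R).

(* probability weight of r : independent Bernoulli(p) bits *)
Definition bern_weight (n : nat) (p : R) (r : {ffun 'I_n -> bool}) : R :=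
  \prod_(j < n) (if r j then p else 1 - p).

Definition prob_r (n : nat) (p : R) (E : pred {ffun 'I_n -> bool}) : R :=
  \sum_(r | E r) bern_weight p r.

Definition exp_r (n : nat) (p : R) (f : {ffun 'I_n -> bool} -> R) : R :=
  \sum_r bern_weight p r * f r.

End Apr.

From Pilot Require Import Defs.
From HB Require Import structures.
From mathcomp Require Import all_boot all_order all_algebra.
From mathcomp Require Import reals sequences exp.
From mathcomp Require Import ring lra.
Import Order.TTheory GRing.Theory Num.Theory.
Local Open Scope ring_scope.
Set Implicit Arguments. Unset Strict Implicit.

(* Let [S] and [N] be the sum and the number of nonzero inputs read while
   [zeta < thr], [K = gamma sqrt n] and [L = log2 n].  The output before
   clamping is [Delta/p + Gamma], the true sum is [S + Gamma], and clamping to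
   [[-n, n]] cannot increase the error, so a large error forces
   [|Delta - p S| > p K/2].  Every sampled nonzero input moves [Delta - p S] by
   [a_j (r_j - p)] and [zeta] by [r_j], hence [exp (+-lam (Delta - p S) - psi N)]
   and [exp ((1 - e^-1) p N - zeta)] are supermartingales along the run.  On
   the bad event one of them exceeds [e^(6 L)]: the first one if
   [N <= 50 L B], the second one otherwise, because [zeta < thr + 1] with
   [thr = 20 L p B].  Markov's inequality bounds the probability by
   [3 e^(-6 L) <= n^-3]; for [p = 1] the estimate is exact.  The mean square
   error bound follows since the error never exceeds [2 n]. *)

Section BernoulliProduct.
Variables (R : realType) (p : R).

Definition cons_bits n (b : bool) (r : {ffun 'I_n -> bool}) : {ffun 'I_n.+1 -> bool} :=
  [ffun i => if unlift ord0 i is Some j then r j else b].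

Lemma big_bits_cons n (F : {ffun 'I_n.+1 -> bool} -> R) :
  \sum_r F r = \sum_(b : bool) \sum_(r : {ffun 'I_n -> bool}) F (cons_bits b r).
Proof.
rewrite pair_big /=.
rewrite (reindex (fun br : bool * {ffun 'I_n -> bool} => cons_bits br.1 br.2)) //=.
exists (fun r : {ffun 'I_n.+1 -> bool} => (r ord0, [ffun j => r (lift ord0 j)])).
  move=> [b r] _ /=; congr pair; first by rewrite ffunE unlift_none.
  by apply/ffunP => j; rewrite !ffunE liftK.
move=> r _; apply/ffunP => i; rewrite !ffunE /=.
by case: unliftP => [j ->|->]; rewrite ?ffunE.
Qed.

Lemma bern_weight_cons n b (r : {ffun 'I_n -> bool}) :
  bern_weight p (cons_bits b r) = (if b then p else 1 - p) * bern_weight p r.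
Proof.
rewrite /bern_weight big_ord_recl !ffunE unlift_none; congr (_ * _).
by apply: eq_bigr => j _; rewrite ffunE liftK.
Qed.

Lemma map_cons_bits (X : Type) n (a : 'I_n.+1 -> X) b (r : {ffun 'I_n -> bool}) :
  [seq (a j, cons_bits b r j) | j <- enum 'I_n.+1] =
  (a ord0, b) :: [seq (a (lift ord0 j), r j) | j <- enum 'I_n].
Proof.
rewrite enum_ordSl /= ffunE unlift_none -map_comp; congr (_ :: _).
by apply: eq_map => j /=; rewrite ffunE liftK.
Qed.

Lemma bern_weight_sum n : \sum_(r : {ffun 'I_n -> bool}) bern_weight p r = 1.
Proof.
rewrite /bern_weight -(bigA_distr_bigA (fun (_ : 'I_n) (b : bool) => if b then p else 1 - p)).
by apply: big1 => j _; rewrite big_bool /= subrKC.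
Qed.

Lemma prob_r_compl n (E F : pred {ffun 'I_n -> bool}) :
  (forall r, F r = ~~ E r) -> prob_r p E = 1 - prob_r p F.
Proof.
move=> FE; have -> : prob_r p F = \sum_(r | ~~ E r) bern_weight p r.
  by apply: eq_bigl => r; rewrite FE.
by rewrite -(bern_weight_sum n) (bigID E) /= addrK.
Qed.

Hypothesis p01 : 0 <= p <= 1.

Lemma bern_weight_ge0 n (r : {ffun 'I_n -> bool}) : 0 <= bern_weight p r.
Proof.
by apply: prodr_ge0 => j _; case: (r j); case/andP: p01 => // _; rewrite subr_ge0.
Qed.

Lemma exp_r_foldl_le (S : Type) (step : S -> R * bool -> S) (Phi : S -> R) (A : R -> Prop) :
  (forall s x, A x -> p * Phi (step s (x, true)) + (1 - p) * Phi (step s (x, false)) <= Phi s) ->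
  forall n (a : 'I_n -> R), (forall j, A (a j)) -> forall s0,
  exp_r p (fun r => Phi (foldl step s0 [seq (a j, r j) | j <- enum 'I_n])) <= Phi s0.
Proof.
have [p0 p1] := andP p01.
move=> super; elim=> [|n IHn] a Aa s0.
  rewrite /exp_r (big_pred1 [ffun=> false]); last first.
    by move=> r /=; apply/esym/eqP/ffunP => -[].
  by rewrite /bern_weight big_ord0 mul1r enum_ord0.
rewrite /exp_r big_bits_cons big_bool /=.
under eq_bigr => r _ do rewrite bern_weight_cons map_cons_bits /= -mulrA.
under [X in _ + X <= _]eq_bigr => r _ do rewrite bern_weight_cons map_cons_bits /= -mulrA.
rewrite -!mulr_sumr; apply: le_trans (super s0 (a ord0) (Aa ord0)).
by apply: lerD; apply: ler_wpM2l; rewrite ?subr_ge0 //; apply: IHn.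
Qed.

Lemma prob_r_sub n (E F : pred {ffun 'I_n -> bool}) :
  (forall r, E r -> F r) -> prob_r p E <= prob_r p F.
Proof.
move=> EF; rewrite /prob_r [X in X <= _]big_mkcond [X in _ <= X]big_mkcond /=.
apply: ler_sum => r _; case: ifP => [/EF -> //|_].
by case: ifP; rewrite ?bern_weight_ge0.
Qed.

Lemma prob_r_le_exp_r n (E : pred {ffun 'I_n -> bool}) (Phi : {ffun 'I_n -> bool} -> R) c :
  0 < c -> (forall r, 0 <= Phi r) -> (forall r, E r -> c <= Phi r) ->
  prob_r p E <= exp_r p Phi / c.
Proof.
move=> c0 Phi0 EPhi; rewrite ler_pdivlMr // /prob_r /exp_r mulr_suml.
apply: (@le_trans _ _ (\sum_(r | E r) bern_weight p r * Phi r)).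
  by apply: ler_sum => r Er; rewrite ler_wpM2l ?bern_weight_ge0 ?EPhi.
rewrite [X in _ <= X](bigID E) /= lerDl.
by apply: sumr_ge0 => r _; rewrite mulr_ge0 ?bern_weight_ge0.
Qed.

Lemma exp_r_sqr_le n (f : {ffun 'I_n -> bool} -> R) (t M : R) :
  0 <= t -> (forall r, `|f r| <= M) ->
  exp_r p (fun r => f r ^+ 2) <= t ^+ 2 + M ^+ 2 * prob_r p (fun r => t < `|f r|).
Proof.
move=> t0 fM; rewrite /exp_r (bigID (fun r => `|f r| <= t)) /=; apply: lerD.
  apply: (@le_trans _ _ (\sum_(r : {ffun 'I_n -> bool}) bern_weight p r * t ^+ 2)); last first.
    by rewrite -mulr_suml bern_weight_sum mul1r.
  rewrite [X in _ <= X](bigID (fun r => `|f r| <= t)) /= -[X in X <= _]addr0.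
  apply: lerD; last by apply: sumr_ge0 => r _; rewrite mulr_ge0 ?bern_weight_ge0 ?sqr_ge0.
  apply: ler_sum => r ft; rewrite ler_wpM2l ?bern_weight_ge0 //.
  by rewrite -real_normK ?num_real //; apply: lerXn2r; rewrite ?nnegrE.
rewrite /prob_r mulr_sumr; under [X in _ <= X]eq_bigl => r do rewrite ltNge.
apply: ler_sum => r _; rewrite mulrC ler_wpM2r ?bern_weight_ge0 //.
have M0 : 0 <= M := le_trans (normr_ge0 _) (fM r).
by rewrite -real_normK ?num_real //; apply: lerXn2r; rewrite ?nnegrE.
Qed.

End BernoulliProduct.

Section Trace.
Variables (R : realType) (thr : R).

(* The state of [Apr] extended by the sum [seen_sum] and the number [seen_nnz]
   of nonzero inputs read while [zeta < thr]. *)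
Record trace := Trace {Delta : R; zeta : nat; Gamma : R; seen_sum : R; seen_nnz : R}.

Definition trace0 := Trace 0 0 0 0 0.

Definition trace_step (s : trace) (x : R * bool) : trace :=
  let: Trace D z G P N := s in
  let: (y, b) := x in
  if z%:R < thr then
    Trace (if b then D + y else D) (if b then addn z (y != 0) else z) G
          (P + y) (N + (y != 0)%:R)
  else Trace D z (G + y) P N.

Definition apr_state (s : trace) : R * nat * R := (Delta s, zeta s, Gamma s).

Lemma apr_state_foldl s xs :
  apr_state (foldl trace_step s xs) = foldl (apr_step thr) (apr_state s) xs.
Proof.
elim: xs s => [|[y b] xs IHxs] [D z G P N] //=.
by rewrite IHxs; congr foldl; case: ifP; case: b.
Qed.

Lemma foldl_trace_sum s xs :
  seen_sum (foldl trace_step s xs) + Gamma (foldl trace_step s xs) =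
  seen_sum s + Gamma s + \sum_(x <- xs) x.1.
Proof.
elim: xs s => [|[y b] xs IHxs] [D z G P N] /=; first by rewrite big_nil addr0.
by rewrite IHxs big_cons; case: ifP => _ /=; ring.
Qed.

Lemma foldl_trace_zeta_lt s xs :
  (zeta s)%:R < thr + 1 -> (zeta (foldl trace_step s xs))%:R < thr + 1.
Proof.
elim: xs s => [|[y b] xs IHxs] [D z G P N] //= zlt; apply: IHxs.
case: ifP => //= z_thr; case: b => //=.
by rewrite natrD ltr_leD // lern1 leq_b1.
Qed.

Definition run_trace n (a : 'I_n -> R) (r : {ffun 'I_n -> bool}) :=
  foldl trace_step trace0 [seq (a j, r j) | j <- enum 'I_n].

Definition trace_supermart (p : R) (Phi : trace -> R) := forall s x, `|x| <= 1 ->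
  p * Phi (trace_step s (x, true)) + (1 - p) * Phi (trace_step s (x, false)) <= Phi s.

Lemma trace_supermartD p Phi Psi :
  trace_supermart p Phi -> trace_supermart p Psi -> trace_supermart p (fun s => Phi s + Psi s).
Proof.
move=> sPhi sPsi s x x1.
by rewrite !mulrDr addrACA; apply: lerD; [apply: sPhi | apply: sPsi].
Qed.

Lemma trace_supermart_sampled p (Phi : trace -> R) :
  (forall D z G G' P N, Phi (Trace D z G P N) = Phi (Trace D z G' P N)) ->
  (forall D z G P N (y : R), z%:R < thr -> y != 0 -> `|y| <= 1 ->
     p * Phi (Trace (D + y) z.+1 G (P + y) (N + 1))
     + (1 - p) * Phi (Trace D z G (P + y) (N + 1)) <= Phi (Trace D z G P N)) ->
  trace_supermart p Phi.
Proof.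
move=> PhiG super [D z G P N] y y1 /=.
have same s : p * Phi s + (1 - p) * Phi s = Phi s by rewrite -mulrDl subrKC mul1r.
case: ifP => z_thr; last by rewrite same (PhiG _ _ _ G).
have [->|y0] := eqVneq y 0; last by rewrite /= addn1 super.
by rewrite !addr0 addn0 same.
Qed.

End Trace.

Section Potentials.
Variables (R : realType) (p : R).
Hypothesis p01 : 0 <= p <= 1.

Lemma expR_bernoulli_le (c : R) :
  p * expR (c * (1 - p)) + (1 - p) * expR (- (c * p)) <= expR (p * (expR c - 1 - c)).
Proof.
have [p0 p1] := andP p01.
have -> : expR (c * (1 - p)) = expR c * expR (- (c * p)).
  by rewrite -expRD; congr expR; ring.
have -> : p * (expR c * expR (- (c * p))) + (1 - p) * expR (- (c * p)) =
          expR (- (c * p)) * (1 + p * (expR c - 1)) by ring.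
rewrite (_ : p * (expR c - 1 - c) = - (c * p) + p * (expR c - 1)); last by ring.
by rewrite expRD ler_wpM2l ?expR_ge0 ?expR_ge1Dx.
Qed.

Lemma expR_drift_le (c u w psi : R) : p * (expR (c * u) - 1 - c * u) <= psi ->
  p * expR (w + c * u * (1 - p) - psi) + (1 - p) * expR (w - c * u * p - psi) <= expR w.
Proof.
move=> hpsi; set E := expR (w - psi).
have -> : expR (w + c * u * (1 - p) - psi) = E * expR (c * u * (1 - p)).
  by rewrite -expRD; congr expR; ring.
have -> : expR (w - c * u * p - psi) = E * expR (- (c * u * p)).
  by rewrite -expRD; congr expR; ring.
have -> : p * (E * expR (c * u * (1 - p))) + (1 - p) * (E * expR (- (c * u * p))) =
          E * (p * expR (c * u * (1 - p)) + (1 - p) * expR (- (c * u * p))) by ring.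
apply: le_trans (ler_wpM2l (expR_ge0 _) (expR_bernoulli_le (c * u))) _.
by rewrite -expRD ler_expR; lra.
Qed.

Lemma expR_sub1_sub_le (c : R) : c <= 1 / 5 -> expR c - 1 - c <= 5 / 4 * c ^+ 2.
Proof.
move=> c5; have e_c := expR_ge1Dx (- c); have e_pos := expR_gt0 c.
have : expR c * (1 - c) <= 1.
  have e_inv : expR c * expR (- c) = 1 by rewrite -expRD subrr expR0.
  by rewrite -[X in _ <= X]e_inv ler_pM2l.
nra.
Qed.

Lemma expRN1_le : expR (-1) <= 1 / 2 :> R.
Proof.
have e1 : 2 <= expR 1 :> R by have := expR_ge1Dx (1 : R); rewrite (_ : 1 + 1 = 2).
have e_inv : expR (-1) * expR 1 = 1 :> R by rewrite -expRD addNr expR0.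
have := expR_gt0 (-1 : R); nra.
Qed.

Variable thr : R.

Definition dev_pot (c psi : R) (s : trace R) :=
  expR (c * (Delta s - p * seen_sum s) - psi * seen_nnz s).

Definition cnt_pot (s : trace R) :=
  expR ((1 - expR (-1)) * p * seen_nnz s - (zeta s)%:R).

Lemma dev_pot_supermart (c psi : R) :
  (forall u, `|u| <= 1 -> p * (expR (c * u) - 1 - c * u) <= psi) ->
  trace_supermart thr p (dev_pot c psi).
Proof.
move=> hpsi; apply: trace_supermart_sampled => // D z G P N y _ _ y1.
have := expR_drift_le (c * (D - p * P) - psi * N) (hpsi y y1).
by rewrite /dev_pot /=; congr (_ * expR _ + _ * expR _ <= _); ring.
Qed.

Lemma cnt_pot_supermart : trace_supermart thr p cnt_pot.
Proof.
apply: trace_supermart_sampled => // D z G P N y _ _ _.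
have := @expR_drift_le (-1) 1 ((1 - expR (-1)) * p * N - z%:R) (p * expR (-1)).
rewrite mulr1 opprK subrK lexx /cnt_pot /= -addn1 natrD => /(_ isT).
congr (_ * expR _ + _ * expR _ <= _); ring.
Qed.

End Potentials.

Lemma exact_dev_supermart (R : realType) (thr : R) :
  trace_supermart thr 1 (fun s => `|Delta s - seen_sum s|).
Proof.
apply: trace_supermart_sampled => // D z G P N y _ _ _.
by rewrite subrr mul0r addr0 mul1r opprD addrACA subrr addr0.
Qed.

Section AprTrace.
Variables (R : realType) (n : nat) (gamma B : R) (a : stream n).

Definition clamp (m x : R) := Num.max (Num.min x m) (- m).

Lemma clamp_dist_le (m x s : R) : `|s| <= m ->
  `|clamp m x - s| <= `|x - s| /\ `|clamp m x - s| <= 2 * m.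
Proof.
rewrite ler_norml /clamp => /andP[ms sm].
have [xm|mx] := lerP x m; [have [mx'|xm'] := lerP (- m) x | have [mm|mm] := lerP (- m) m];
  split; rewrite ler_norml; apply/andP; split;
  (have [xs|xs] := lerP 0 (x - s); [rewrite ?(ger0_norm xs) | rewrite ?(ltr0_norm xs)]); lra.
Qed.

Lemma abs_aval j : `|aval R a j| <= 1.
Proof.
rewrite /aval /Defs.tval; case: (a j) => -[|[|[|k]]] lt3 //=.
- by rewrite sub0r normrN normr1.
- by rewrite subrr normr0.
- by rewrite mulr2n addrK normr1.
Qed.

Lemma abs_true_sum : `|true_sum R a| <= n%:R.
Proof.
rewrite /true_sum (le_trans (ler_norm_sum _ _ _)) //.
by rewrite -[n in n%:R]card_ord -sum1_card natr_sum ler_sum // => j _; apply: abs_aval.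
Qed.

Let p := apr_p n gamma B.
Let thr := apr_thr n gamma B.

Local Notation apr_trace := (run_trace thr (aval R a)).

Lemma AprE r : Apr gamma B a r = clamp n%:R (Delta (apr_trace r) / p + Gamma (apr_trace r)).
Proof. by rewrite /Apr -[(0, 0%N, 0)]/(apr_state (trace0 R)) -apr_state_foldl. Qed.

Lemma apr_trace_sum r : seen_sum (apr_trace r) + Gamma (apr_trace r) = true_sum R a.
Proof. by rewrite foldl_trace_sum /= !addr0 add0r big_map big_enum. Qed.

Lemma Apr_err_le_dev r :
  `|Apr gamma B a r - true_sum R a| <= `|Delta (apr_trace r) / p - seen_sum (apr_trace r)|.
Proof.
rewrite AprE; apply: le_trans (proj1 (clamp_dist_le _ abs_true_sum)) _.
by rewrite -(apr_trace_sum r) opprD addrACA subrr addr0.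
Qed.

Lemma Apr_err_le r : `|Apr gamma B a r - true_sum R a| <= 2 * n%:R.
Proof.
rewrite AprE.
by case: (clamp_dist_le (Delta (apr_trace r) / p + Gamma (apr_trace r)) abs_true_sum).
Qed.

End AprTrace.

Section Concentration.
Variables (R : realType) (p L B K : R).
Hypotheses (L_ge1 : 1 <= L) (K_gt0 : 0 < K) (K_lt_B : K < B).
Hypotheses (pE : p = 6000 * L ^+ 2 * B / K ^+ 2) (p_le1 : p <= 1).

Local Notation thr := (20 * L * p * B).
(* [lam] and [psi] are chosen so that [lam * (p * (K / 2)) - psi * (50 * L * B) = 6 * L]. *)
Local Notation lam := (K / (250 * L * B)).
Local Notation psi := (5 / 4 * p * lam ^+ 2).

Let B_gt0 : 0 < B. Proof. exact: lt_trans K_lt_B. Qed.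
Let L_gt0 : 0 < L. Proof. exact: lt_le_trans L_ge1. Qed.

Let p_gt0 : 0 < p.
Proof. by rewrite pE !(mulr_gt0, invr_gt0, exprn_gt0). Qed.

Let p01 : 0 <= p <= 1. Proof. by rewrite ltW. Qed.

Let lam_ge0 : 0 <= lam. Proof. by rewrite ltW // !(mulr_gt0, invr_gt0). Qed.

Let lam_le : lam <= 1 / 5.
Proof.
have LB : B <= L * B := ler_peMl (ltW B_gt0) L_ge1.
have LB_gt0 : 0 < 250 * L * B by rewrite !mulr_gt0.
have B0 := B_gt0.
rewrite ler_pdivrMr //; have -> : 1 / 5 * (250 * L * B) = 50 * (L * B) by field.
by move: K_lt_B; lra.
Qed.

Let pB_ge : 6000 * L ^+ 2 <= p * B.
Proof.
rewrite pE mulrAC ler_pdivlMr ?exprn_gt0 // -[_ * B * B]mulrA -expr2.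
apply: ler_wpM2l; first by rewrite mulr_ge0 ?sqr_ge0.
by rewrite ler_pXn2r ?nnegrE ?ltW.
Qed.

Definition dev_cnt_pot (s : trace R) :=
  dev_pot p lam psi s + dev_pot p (- lam) psi s + cnt_pot p s.

Lemma dev_cnt_pot_supermart : trace_supermart thr p dev_cnt_pot.
Proof.
have hpsi c : `|c| = lam -> forall u, `|u| <= 1 -> p * (expR (c * u) - 1 - c * u) <= psi.
  move=> c_lam u u1.
  have cu_le : `|c * u| <= lam by rewrite normrM c_lam ler_piMr.
  have cu_sq : (c * u) ^+ 2 <= lam ^+ 2.
    by rewrite -real_normK ?num_real // ler_pXn2r ?nnegrE.
  have := expR_sub1_sub_le (le_trans (ler_norm _) (le_trans cu_le lam_le)).
  have := p_gt0; nra.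
apply: trace_supermartD; [apply: trace_supermartD|]; last exact: cnt_pot_supermart p01 _.
- by apply: (dev_pot_supermart p01); apply: hpsi; rewrite ger0_norm.
- by apply: (dev_pot_supermart p01); apply: hpsi; rewrite normrN ger0_norm.
Qed.

Lemma dev_cnt_pot_large (s : trace R) :
  (zeta s)%:R < thr + 1 -> p * (K / 2) < `|Delta s - p * seen_sum s| ->
  expR (6 * L) <= dev_cnt_pot s.
Proof.
case: s => D z G P N /=; rewrite /dev_cnt_pot /dev_pot /cnt_pot /= => z_lt dev_gt.
have e1 := expR_ge0 (lam * (D - p * P) - psi * N).
have e2 := expR_ge0 (- lam * (D - p * P) - psi * N).
have e3 := expR_ge0 ((1 - expR (-1)) * p * N - z%:R).
have [N_le|N_gt] := lerP N (50 * L * B).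
  have drift : 6 * L <= lam * `|D - p * P| - psi * N.
    have <- : lam * (p * (K / 2)) - psi * (50 * L * B) = 6 * L.
      by rewrite pE; field; rewrite !gt_eqF.
    have psi_ge0 : 0 <= psi by rewrite mulr_ge0 ?sqr_ge0 // mulr_ge0 ?divr_ge0 // ltW.
    by apply: lerB; apply: ler_wpM2l => //; exact: ltW.
  have : expR (lam * `|D - p * P| - psi * N)
           <= expR (lam * (D - p * P) - psi * N) + expR (- lam * (D - p * P) - psi * N).
    have [Y_ge0|Y_lt0] := lerP 0 (D - p * P).
      by rewrite ger0_norm // lerDl.
    by rewrite ltr0_norm // mulrN -mulNr lerDr.
  by rewrite -ler_expR in drift; lra.
have e_half := expRN1_le R.
suff : 6 * L <= (1 - expR (-1)) * p * N - z%:R by rewrite -ler_expR; lra.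
have p_ge0 := ltW p_gt0; have L1 := L_ge1.
have N_ge0 : 0 <= N by apply: le_trans (ltW N_gt); rewrite !mulr_ge0 // ltW.
have e_gap : 0 <= p * N * (1 / 2 - expR (-1)) by rewrite !mulr_ge0 // subr_ge0.
have N_excess : 0 <= p * (N - 50 * L * B) by rewrite mulr_ge0 // subr_ge0 ltW.
have pB_le : p * B <= L * (p * B) by rewrite ler_peMl // mulr_ge0 // ltW.
have L_le_sqr : L <= L ^+ 2 by rewrite expr2 ler_peMl // ltW.
have := pB_ge; lra.
Qed.

Lemma run_trace_dev_tail n (a : 'I_n -> R) : (forall j, `|a j| <= 1) ->
  prob_r p (fun r => p * (K / 2) <
                     `|Delta (run_trace thr a r) - p * seen_sum (run_trace thr a r)|)
    <= 3 * expR (- (6 * L)).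
Proof.
move=> a1; have pot_ge0 s : 0 <= dev_cnt_pot s by rewrite !addr_ge0 ?expR_ge0.
apply: le_trans (prob_r_le_exp_r p01 (expR_gt0 _) (fun r => pot_ge0 _) _) _.
  move=> r; apply: dev_cnt_pot_large; apply: foldl_trace_zeta_lt => /=.
  by rewrite ltr_pwDr // !mulr_ge0 // ltW.
rewrite expRN ler_pM2r ?invr_gt0 ?expR_gt0 //.
apply: le_trans (exp_r_foldl_le p01 dev_cnt_pot_supermart a1 _) _.
by rewrite /dev_cnt_pot /dev_pot /cnt_pot /= !(mulr0, subr0, oppr0, expR0); lra.
Qed.

End Concentration.

Lemma run_trace_exact_tail (R : realType) (thr t : R) n (a : 'I_n -> R) :
  (forall j, `|a j| <= 1) -> 0 < t ->
  prob_r (1 : R) (fun r => t < `|Delta (run_trace thr a r) - seen_sum (run_trace thr a r)|)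
    = 0.
Proof.
move=> a1 t_gt0; have p01 : 0 <= (1 : R) <= 1 by rewrite ler01 lexx.
apply/eqP; rewrite eq_le sumr_ge0 ?andbT; last by move=> r _; apply: (bern_weight_ge0 p01).
apply: le_trans (prob_r_le_exp_r p01 t_gt0 (fun r => normr_ge0 _) (fun r => @ltW _ _ t _)) _.
rewrite pmulr_lle0 ?invr_gt0 //.
apply: le_trans (exp_r_foldl_le p01 (exact_dev_supermart thr) a1 _) _.
by rewrite /= subrr normr0.
Qed.

Lemma three_cube_le_expR_log2 (R : realType) n : (0 < n)%N -> 1 <= log2 (n%:R : R) ->
  3 * n%:R ^+ 3 <= expR (6 * log2 (n%:R : R)).
Proof.
move=> n_gt0; set L := log2 _ => L_ge1.
have ln2_gt0 : 0 < ln (2 : R) by apply: ln_gt0; rewrite ltr1n.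
have ln2_le1 : ln (2 : R) <= 1 by have := @le_ln1Dx R 1; rewrite -[1 + 1]/2; apply; lra.
have nE : n%:R = expR (L * ln 2) :> R by rewrite /L /log2 divfK ?gt_eqF // lnK // posrE ltr0n.
have cube_le : n%:R ^+ 3 <= expR (3 * L) :> R.
  rewrite nE -expRM_natl ler_expR ler_wpM2l // ler_piMr //.
  exact: le_trans ler01 L_ge1.
have three_le : 3 <= expR (3 * L) :> R by apply: le_trans _ (expR_ge1Dx _); lra.
rewrite (_ : 6 * L = 3 * L + 3 * L); last by ring.
by rewrite expRD ler_pM // exprn_ge0.
Qed.

Section AprTail.
Variables (R : realType) (n : nat) (gamma B : R).
Hypotheses (n_gt0 : (0 < n)%N) (gamma_gt : 4 / Num.sqrt (n%:R : R) < gamma).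
Hypothesis B_gt : gamma * Num.sqrt n%:R < B.

Local Notation sn := (Num.sqrt (n%:R : R)).
Local Notation K := (gamma * sn).
Local Notation p := (apr_p n gamma B).
Local Notation L := (log2 (n%:R : R)).
Local Notation err a r := (Apr gamma B a r - true_sum R a).

Let sqrt_n_gt0 : 0 < sn. Proof. by rewrite sqrtr_gt0 ltr0n. Qed.

Let K_gt4 : 4 < K. Proof. by move: gamma_gt; rewrite ltr_pdivrMr ?sqrt_n_gt0. Qed.

Let sqrK : K ^+ 2 = gamma ^+ 2 * n%:R. Proof. by rewrite exprMn sqr_sqrtr ?ler0n. Qed.

Let apr_p01 : 0 <= p <= 1.
Proof.
have B_gt0 : 0 < B by have := K_gt4; move: B_gt; lra.
rewrite /apr_p le_min ge_min ler01 lexx orbT !andbT.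
apply: divr_ge0; last exact: mulr_ge0 (sqr_ge0 _) (ler0n _ _).
by apply: mulr_ge0 (ltW B_gt0); apply: mulr_ge0 (sqr_ge0 _).
Qed.

Let K_gt0 : 0 < K. Proof. exact: lt_trans K_gt4. Qed.

Lemma Apr_tail_exact (a : stream n) : p = 1 -> prob_r p (fun r => K / 2 < `|err a r|) <= 0.
Proof.
move=> p1; have p01 : 0 <= (1 : R) <= 1 by rewrite ler01 lexx.
rewrite p1 -(run_trace_exact_tail (apr_thr n gamma B) (abs_aval R a) (t := K / 2)) ?divr_gt0 //.
apply: (prob_r_sub p01) => r /lt_le_trans; apply.
by have := Apr_err_le_dev gamma B a r; rewrite p1 divr1.
Qed.

Lemma Apr_tail_sampled (a : stream n) : 1 <= L ->
  p = 6000 * L ^+ 2 * B / K ^+ 2 -> p <= 1 ->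
  prob_r p (fun r => K / 2 < `|err a r|) <= 3 * expR (- (6 * L)).
Proof.
move=> L_ge1 pE p_le1; have B_gt0 : 0 < B by have := K_gt0; move: B_gt; lra.
have p_gt0 : 0 < p.
  rewrite pE; apply: divr_gt0; last exact: exprn_gt0.
  by apply: mulr_gt0 B_gt0; apply: mulr_gt0 => //; apply: exprn_gt0; lra.
have p01 : 0 <= p <= 1 by rewrite ltW.
apply: le_trans (prob_r_sub p01 _) (run_trace_dev_tail L_ge1 K_gt0 B_gt pE p_le1 (abs_aval R a)).
move=> r bad; have := lt_le_trans bad (Apr_err_le_dev gamma B a r).
set D := Delta _; set P := seen_sum _.
have -> : D - p * P = p * (D / p - P) by field; rewrite gt_eqF.
by rewrite normrM (gtr0_norm p_gt0) ltr_pM2l.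
Qed.

Lemma Apr_tail (a : stream n) :
  prob_r p (fun r => gamma / 2 * sn < `|err a r|) <= 1 / n%:R ^+ 3.
Proof.
have n_gt0R : 0 < n%:R :> R by rewrite ltr0n.
have bound_ge0 : 0 <= 1 / n%:R ^+ 3 :> R by rewrite divr_ge0 ?exprn_ge0 ?ltW.
rewrite mulrAC; have K4 := K_gt4.
have [Kn|Kn] := lerP (4 * n%:R) K.
  rewrite /prob_r big_pred0 // => r; apply/negbTE; rewrite -leNgt.
  by have := Apr_err_le gamma B a r; lra.
have L_ge1 : 1 <= L.
  have n_gt1 : (1 < n)%N by rewrite -(@ltr1n R); lra.
  by rewrite /log2 ler_pdivlMr ?mul1r ?ln_gt0 ?ltr1n // ler_ln ?posrE ?ler_nat.
set X := 6000 * L ^+ 2 * B / (gamma ^+ 2 * n%:R).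
have [X_le1|X_gt1] := lerP X 1; last first.
  have p1 : p = 1 by rewrite /apr_p -/X; apply: min_r; apply: ltW.
  exact: le_trans (Apr_tail_exact a p1) bound_ge0.
have pE : p = 6000 * L ^+ 2 * B / K ^+ 2 by rewrite sqrK /apr_p -/X; apply: min_l.
have p_le1 : p <= 1 by rewrite /apr_p ge_min lexx orbT.
apply: le_trans (Apr_tail_sampled a L_ge1 pE p_le1) _.
rewrite expRN ler_pdivlMr ?exprn_gt0 // mulrAC ler_pdivrMr ?expR_gt0 // mul1r.
exact: three_cube_le_expR_log2.
Qed.

Lemma Apr_sqr_err_le (a : stream n) : exp_r p (fun r => err a r ^+ 2) <= gamma ^+ 2 * n%:R.
Proof.
have n_gt0R : 0 < n%:R :> R by rewrite ltr0n.
have t_ge0 : 0 <= gamma / 2 * sn by rewrite mulrAC divr_ge0 // ltW.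
apply: le_trans (exp_r_sqr_le apr_p01 t_ge0 (Apr_err_le gamma B a)) _.
apply: le_trans (lerD (lexx _) (ler_wpM2l (sqr_ge0 _) (Apr_tail a))) _.
have -> : (gamma / 2 * sn) ^+ 2 = K ^+ 2 / 4 by field.
have -> : (2 * n%:R) ^+ 2 * (1 / n%:R ^+ 3) = 4 / n%:R :> R by field; rewrite gt_eqF.
have : 4 / n%:R <= 4 :> R by rewrite ler_pdivrMr // ler_peMr // ler1n.
have : 16 < K ^+ 2 by have := K_gt4; nra.
by rewrite -sqrK; lra.
Qed.

End AprTail.

Theorem proposition4p6 (R : realType) (n : nat) (gamma B : R) :
  (0 < n)%N ->
  4 / Num.sqrt (n%:R : R) < gamma ->
  gamma * Num.sqrt (n%:R) < B ->
  (forall a : stream n,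
     1 - 1 / (n%:R ^+ 3) <=
     prob_r (apr_p n gamma B)
       (fun r => `|Apr gamma B a r - true_sum R a| <= gamma / 2 * Num.sqrt (n%:R)))
  /\
  (forall D : {ffun stream n -> R},
     (forall a, 0 <= D a) -> \sum_a D a = 1 ->
     \sum_a D a * exp_r (apr_p n gamma B) (fun r => (Apr gamma B a r - true_sum R a) ^+ 2)
       <= gamma ^+ 2 * n%:R).
Proof.
move=> n_gt0 gamma_gt B_gt; split=> [a | D D_ge0 D_sum1].
  rewrite (prob_r_compl _ (fun r => ltNge _ _)) lerD2l lerN2.
  exact: Apr_tail.
have err_le a := ler_wpM2l (D_ge0 a) (Apr_sqr_err_le n_gt0 gamma_gt B_gt a).
by apply: le_trans (ler_sum _ (fun a _ => err_le a)) _; rewrite -mulr_suml D_sum1 mul1r.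
Qed.
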